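(* Let $G$ be a unimodular surface-like pseudolattice with point-like element $\mathsf p$ and Serre operator $S$, and let $f\in G$ be an element of rank zero with $\chi(f,f)=1$ (i.e. of self-intersection $-1$). Let $G_f={}^\perp f=\{v\in G\mid \chi(v,f)=0\}$ with the restricted pairing. Then $z:=(S-1)(f)$ lies in $\mathbb{Z}\mathsf p\subseteq G_f$, and the numerical blow-up $\operatorname{Bl}_z G_f=\mathbb{Z}g\oplus G_f$ is isometric to $G$ via the map sending $g\mapsto f$ and $v\mapsto v$ for $v\in G_f$.
   Context: A pseudolattice is a finitely generated free abelian group with a non-degenerate bilinear form $\chi$; unimodular means $\chi$ induces $G\cong\operatorname{Hom}(G,\mathbb{Z})$. Surface-like: there is a primitive $\mathsf p$ with $\chi(\mathsf p,\mathsf p)=0$, $\chi(\mathsf p,v)=\chi(v,\mathsf p)$ for all $v$, and $\chi$ symmetric on $\mathsf p^\perp$; rank $\mathsf r(v)=\chi(\mathsf p,v)$. A Serre operator is an isometry $S$ with $\chi(v,w)=\chi(w,S(v))$ for all $v,w$ (it exists and is unique for unimodular $G$). For $z\in\mathbb{Z}\mathsf p$, the numerical blow-up of a unimodular surface-like pseudolattice $H$ at $z$ is $\operatorname{Bl}_zH=\mathbb{Z}g\oplus H$ with pairing extending $\chi$ on $H$ by $\chi(g,g)=1$, $\chi(h,g)=0$ and $\chi(g,h)=\chi(z,h)$ for all $h\in H$. *)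

(* A pseudolattice of rank n is modelled as Z^n = 'rV[int]_n
   with the bilinear form given by a Gram matrix M : 'M[int]_n. *)
From HB Require Import structures.
From mathcomp Require Import all_boot all_algebra.
Set Implicit Arguments. Unset Strict Implicit. Unset Printing Implicit Defensive.
Import GRing.Theory Num.Theory.
Local Open Scope ring_scope.

Definition chi (n : nat) (M : 'M[int]_n) (v w : 'rV[int]_n) : int :=
  (v *m M *m w^T) 0 0.

Definition pl_nondegenerate (n : nat) (M : 'M[int]_n) : Prop := \det M != 0.

(* pl_unimodular: v |-> chi(v, -) is an isomorphism G -> Hom(G, Z),
   i.e. the Gram matrix is invertible over Z *)
Definition pl_unimodular (n : nat) (M : 'M[int]_n) : Prop :=
  M \in unitmx.

Definition pl_primitive (n : nat) (p : 'rV[int]_n) : Prop :=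
  forall (k : int) (w : 'rV[int]_n), p = k *: w -> k = 1 \/ k = -1.

Definition pl_surface_like (n : nat) (M : 'M[int]_n) (p : 'rV[int]_n) : Prop :=
  [/\ pl_primitive p,
      chi M p p = 0,
      (forall v, chi M p v = chi M v p) &
      (forall v w, chi M p v = 0 -> chi M p w = 0 -> chi M v w = chi M w v)].

Definition rk (n : nat) (M : 'M[int]_n) (p v : 'rV[int]_n) : int := chi M p v.

Definition pl_serre_operator (n : nat) (M : 'M[int]_n) (S : 'rV[int]_n -> 'rV[int]_n) : Prop :=
  [/\ {morph S : x y / x + y},
      bijective S,
      (forall v w, chi M (S v) (S w) = chi M v w) &
      (forall v w, chi M v w = chi M w (S v))].

(* Pairing on the numerical blow-up Bl_z H = Z g (+) H, H a sub-pseudolattice of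
   Z^n with the restricted form, an element a g + v written as (a, v):
   chi(a g + v, b g + w) = a b chi(g,g) + a chi(g,w) + b chi(v,g) + chi(v,w)
                          = a b + a chi(z,w) + chi(v,w). *)
Definition bl_chi (n : nat) (M : 'M[int]_n) (z : 'rV[int]_n)
  (x y : int * 'rV[int]_n) : int :=
  x.1 * y.1 + x.1 * chi M z y.2 + chi M x.2 y.2.

From HB Require Import structures.
From mathcomp Require Import all_boot all_algebra.

Set Implicit Arguments.
Unset Strict Implicit.
Unset Printing Implicit Defensive.
Import GRing.Theory Num.Theory.
Local Open Scope ring_scope.

(* The Serre defect z = S f - f pairs to zero against the rank-zero sublattice
   p^perp, on which chi is symmetric: chi(v, S f) = chi(f, v) = chi(v, f).  In a
   unimodular lattice the left orthogonal of p^perp is Z p, because primitivity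
   of p yields v0 with chi(v0, p) = 1, hence v = chi(v, p) v0 + (element of
   p^perp).  Since chi(f, f) = 1, G splits as Z f (+) ^perp f, and the only
   asymmetric cross term chi(f, w) = chi(w, S f) = chi(w, z) = chi(z, w) is the
   one prescribed by the blow-up pairing, p being symmetric against everything. *)

Section ColumnBezout.
Variable n : nat.
Implicit Types (c : 'cV[int]_n) (v : 'rV[int]_n).

Lemma delta_mulmx_coef c i : (delta_mx (0 : 'I_1) i *m c) 0 0 = c i ord0.
Proof. by rewrite -rowE mxE. Qed.

(* Euclidean descent: a positive value m of v |-> v c either divides every
   entry of c, forcing m = 1, or leaves a smaller positive remainder. *)
Lemma colvec_value_eq1 c :
    (forall m : int, (forall i, (m %| c i ord0)%Z) -> m = 1 \/ m = -1) ->
  exists v, (v *m c) 0 0 = 1.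
Proof.
move=> prim_c; pose phi v := (v *m c) 0 0.
have phiB u v (k : int) : phi (u - k *: v) = phi u - k * phi v.
  by rewrite /phi mulmxBl -scalemxAl !mxE.
have descent (m : nat) : (0 < m)%N -> (exists v, phi v = m%:Z) ->
    exists v, phi v = 1.
  elim/ltn_ind: m => m IH m_gt0 [v phi_v].
  have [/forallP dvd_m | ] := boolP [forall i, (m%:Z %| c i ord0)%Z].
    by have [[m1] | //] := prim_c _ dvd_m; exists v; rewrite phi_v m1.
  rewrite negb_forall => /existsP [i /dvdz_mod0P ndvd].
  have m_neq0 : m%:Z != 0 by rewrite eqz_nat -lt0n.
  have r_ge0 := modz_ge0 (c i ord0) m_neq0.
  apply: (IH `|(c i ord0 %% m)%Z|%N).
  - by rewrite -ltz_nat gez0_abs // ltz_pmod // ltz_nat.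
  - by rewrite absz_gt0; apply/eqP.
  exists (delta_mx (0 : 'I_1) i - (c i ord0 %/ m)%Z *: v).
  by rewrite phiB phi_v /phi delta_mulmx_coef gez0_abs.
have [i ci_neq0] : exists i, c i ord0 != 0.
  apply/existsP; apply: contraT; rewrite negb_exists => /forallP ci_eq0.
  by have [j | // | //] := prim_c 0; rewrite dvd0z; apply/negPn/ci_eq0.
apply: (descent `|c i ord0|%N); first by rewrite absz_gt0.
exists (sgz (c i ord0) *: delta_mx (0 : 'I_1) i).
by rewrite /phi -scalemxAl mxE delta_mulmx_coef -abszEsg.
Qed.

End ColumnBezout.

Section Pseudolattice.
Variables (n : nat) (M : 'M[int]_n).
Implicit Types (u v w x y z : 'rV[int]_n) (a b k : int).

Lemma chi_mulmxA v w : chi M v w = (v *m (M *m w^T)) 0 0.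
Proof. by rewrite /chi mulmxA. Qed.

Lemma chiDl u v w : chi M (u + v) w = chi M u w + chi M v w.
Proof. by rewrite /chi !mulmxDl mxE. Qed.

Lemma chiDr u v w : chi M w (u + v) = chi M w u + chi M w v.
Proof. by rewrite /chi linearD /= mulmxDr mxE. Qed.

Lemma chiBl u v w : chi M (u - v) w = chi M u w - chi M v w.
Proof. by rewrite /chi !mulmxBl !mxE. Qed.

Lemma chiZl k v w : chi M (k *: v) w = k * chi M v w.
Proof. by rewrite /chi -!scalemxAl mxE. Qed.

Lemma chiZr k v w : chi M w (k *: v) = k * chi M w v.
Proof. by rewrite /chi linearZ /= -scalemxAr mxE. Qed.

Lemma chiBr u v w : chi M w (u - v) = chi M w u - chi M w v.
Proof. by rewrite chiDr -scaleN1r chiZr mulN1r. Qed.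

Lemma orth_decomposition f x : chi M f f = 1 ->
  exists! av : int * 'rV[int]_n, chi M av.2 f = 0 /\ x = av.1 *: f + av.2.
Proof.
move=> ff; exists (chi M x f, x - chi M x f *: f); split.
  by rewrite /= chiBl chiZl ff mulr1 subrr addrC subrK.
move=> [b w] /= [wf ->].
by rewrite chiDl chiZl ff mulr1 wf addr0 [b *: f + w]addrC addrK.
Qed.

Lemma bl_chi_isometry f z a b v w :
    chi M f f = 1 -> chi M v f = 0 -> chi M z w = chi M f w ->
  chi M (a *: f + v) (b *: f + w) = bl_chi M z (a, v) (b, w).
Proof.
move=> ff vf zw.
by rewrite /bl_chi /= !chiDl !chiDr !chiZl !chiZr ff vf zw mulr1 mulr0 add0r.
Qed.

Section Unimodular.
Hypothesis uM : M \in unitmx.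

Lemma unitmx_dvd_scale m x :
  (forall i, (m %| (M *m x^T) i ord0)%Z) -> exists y, x = m *: y.
Proof.
move=> dvd_m; pose c := \col_i ((M *m x^T) i ord0 %/ m)%Z.
exists (invmx M *m c)^T; apply: trmx_inj.
rewrite linearZ /= trmxK scalemxAr.
suff -> : m *: c = M *m x^T by rewrite mulKmx.
by apply/matrixP=> i j; rewrite ord1 [LHS]mxE [c _ _]mxE mulrC divzK.
Qed.

Lemma unitmx_chi_eq0 x : (forall v, chi M v x = 0) -> x = 0.
Proof.
move=> x_orth; have [i | y ->] := @unitmx_dvd_scale 0 x; last by rewrite scale0r.
by rewrite dvd0z -delta_mulmx_coef -chi_mulmxA x_orth.
Qed.

Lemma unitmx_primitive_chi_eq1 p : pl_primitive p -> exists v, chi M v p = 1.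
Proof.
move=> pp; have [|v v1] := @colvec_value_eq1 _ (M *m p^T).
  by move=> m /(@unitmx_dvd_scale m p) [y /pp].
by exists v; rewrite chi_mulmxA.
Qed.

Section PointLike.
Variable p : 'rV[int]_n.
Hypothesis pp : pl_primitive p.
Hypothesis chi_p_sym : forall v, chi M p v = chi M v p.

(* v - chi(v, p) v0 lies in p^perp whenever chi(v0, p) = 1. *)
Lemma orth_point_perp_scale z :
  (forall v, chi M p v = 0 -> chi M v z = 0) -> exists k, z = k *: p.
Proof.
move=> z_orth; have [v0 v0p] := unitmx_primitive_chi_eq1 pp.
exists (chi M v0 z); apply/eqP; rewrite -subr_eq0; apply/eqP.
apply: unitmx_chi_eq0 => // v.
have /z_orth : chi M p (v - chi M v p *: v0) = 0.
  by rewrite chi_p_sym chiBl chiZl v0p mulr1 subrr.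
rewrite chiBl chiZl chiBr chiZr -chi_p_sym => /eqP; rewrite subr_eq0 => /eqP ->.
by rewrite mulrC subrr.
Qed.

End PointLike.

End Unimodular.

End Pseudolattice.

Theorem mainTheorem4 (n : nat) (M : 'M[int]_n) (p : 'rV[int]_n)
  (S : 'rV[int]_n -> 'rV[int]_n) (f : 'rV[int]_n) :
  pl_nondegenerate M -> pl_unimodular M -> pl_surface_like M p -> pl_serre_operator M S ->
  rk M p f = 0 -> chi M f f = 1 ->
  (exists k : int, S f - f = k *: p) /\
  (forall k : int, chi M (k *: p) f = 0) /\
  (forall x : 'rV[int]_n, exists! av : int * 'rV[int]_n,
      chi M av.2 f = 0 /\ x = av.1 *: f + av.2) /\
  (forall (a b : int) (v w : 'rV[int]_n), chi M v f = 0 -> chi M w f = 0 ->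
      chi M (a *: f + v) (b *: f + w) = bl_chi M (S f - f) (a, v) (b, w)).
Proof.
move=> _ uM [pp _ chi_p_sym chi_perp_sym] [_ _ _ serre] rk_f ff.
rewrite /rk in rk_f.
have z_perp v : chi M p v = 0 -> chi M v (S f - f) = 0.
  by move=> pv; rewrite chiBr -serre chi_perp_sym ?subrr.
have [k z_kp] := orth_point_perp_scale uM pp chi_p_sym z_perp.
split; first by exists k.
split; first by move=> k'; rewrite chiZl rk_f mulr0.
split; first by move=> x; apply: orth_decomposition.
move=> a b v w vf wf; apply: bl_chi_isometry => //.
by rewrite z_kp chiZl chi_p_sym -chiZr -z_kp chiBr -serre wf subr0.
Qed.
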